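(* Let functions $w_i,y_i$ ($i\in\mathcal{I}$), $z_j$ ($j\in\mathcal{J}$), $\psi_{ij}$ ($i\in\mathcal{I},j\in\mathcal{J}$, with $\psi_{ij}=0$ for $i\not\sim j$) be measurable and locally bounded on $[0,\infty)$ and satisfy $$\sum_{j\in\mathcal{J}}\mathfrak{T}_{\mu_{ij}}\psi_{ij}=w_i-\mathfrak{T}_{\theta_i}y_i,\quad i\in\mathcal{I},\qquad \sum_{i\in\mathcal{I}}\psi_{ij}=-z_j,\quad j\in\mathcal{J}.$$ (i) Then there are finite (possibly empty) sequences $A_i$ ($i\in\mathcal{I}$) and $B_j$ ($j\in\mathcal{J}$) with values in $\{\mu_{ij}:(i,j)\in\mathcal{E}\}$, such that, letting $A_i'$ denote the concatenation of $A_i$ with $\theta_i$, $$\sum_{i\in\mathcal{I}}\mathfrak{T}_{A_i}w_i-\sum_{i\in\mathcal{I}}\mathfrak{T}_{A_i'}y_i+\sum_{j\in\mathcal{J}}\mathfrak{T}_{B_j}z_j=0.$$ (ii) If $\mu_{ij}=\mu_j$ for $(i,j)\in\mathcal{E}$ and $\theta_i=0$ for $i\in\mathcal{I}$, then $\sum_{i\in\mathcal{I}}(w_i-y_i)+\sum_{j\in\mathcal{J}}\mathfrak{T}_{\mu_j}z_j=0$. (iii) If $\mu_{ij}=\mu_i$ for $(i,j)\in\mathcal{E}$ and $\theta_i=0$ for $i\in\mathcal{I}$, then $\sum_{i\in\mathcal{I}}\mathfrak{T}_{M_i}(w_i-y_i)+\mathfrak{T}_M(e\cdot z)=0$, where $M_i=(\mu_{i'})_{i'\in\mathcal{I},i'\ne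 i}$ and $M=(\mu_{i'})_{i'\in\mathcal{I}}$.
   Context: $\mathcal{I}=\{1,\dots,I\}$, $\mathcal{J}=\{I+1,\dots,I+J\}$, $\mathcal{E}\subset\mathcal{I}\times\mathcal{J}$, $i\sim j$ iff $(i,j)\in\mathcal{E}$; the bipartite graph $\mathcal{T}$ with vertices $\mathcal{I}\cup\mathcal{J}$ and edges $\mathcal{E}$ is a tree. Constants $\mu_{ij}>0$ for $(i,j)\in\mathcal{E}$, $\mu_{ij}=0$ otherwise, and $\theta_i\ge0$. For $f:[0,\infty)\to\mathbb{R}$ locally bounded measurable, $\mathfrak{J}f(t)=\int_0^tf(s)ds$ and, for $\alpha\in\mathbb{R}$, $\mathfrak{T}_\alpha f=f+\alpha\mathfrak{J}f$. For a finite real sequence $A=(\alpha_1,\dots,\alpha_k)$, $\mathfrak{T}_A=\mathfrak{T}_{\alpha_1}\circ\cdots\circ\mathfrak{T}_{\alpha_k}$ (identity if $A$ is empty). $e=(1,\dots,1)'$. *)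

From HB Require Import structures.
From mathcomp Require Import all_boot all_order all_algebra.
From mathcomp Require Import all_classical all_reals all_analysis.
Set Implicit Arguments. Unset Strict Implicit. Unset Printing Implicit Defensive.
Import Order.TTheory GRing.Theory Num.Theory.
Local Open Scope classical_set_scope.
Local Open Scope ring_scope.

Section Ops.
Variable R : realType.

Definition Jop (f : R -> R) : R -> R :=
  fun t => Rintegral lebesgue_measure `[0, t] f.

Definition Top (alpha : R) (f : R -> R) : R -> R :=
  fun t => f t + alpha * Jop f t.

Definition TopSeq (A : seq R) (f : R -> R) : R -> R :=
  foldr Top f A.

Definition meas_locbdd (f : R -> R) : Prop :=
  measurable_fun (`[(0:R), +oo[%classic : set R) f /\
  forall T : R, 0 <= T -> exists C : R, forall s : R, 0 <= s <= T -> `|f s| <= C.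
End Ops.

Definition bip_adj (I J : nat) (E : 'I_I -> 'I_J -> bool) : rel ('I_I + 'I_J) :=
  fun u v => match u, v with
             | inl i, inr j => E i j
             | inr j, inl i => E i j
             | _, _ => false
             end.

Definition is_tree (I J : nat) (E : 'I_I -> 'I_J -> bool) : Prop :=
  (forall u v, connect (bip_adj E) u v) /\
  (forall p : seq ('I_I + 'I_J), ucycle (bip_adj E) p -> (size p <= 2)%N).

(* The operators T_a commute pairwise and are linear on locally integrable
   functions, so T_A only depends on the multiset A.  For a vertex v of the
   tree let A_v collect the mu_e over the edges e = (i', j') such that v and
   j' lie in the same component of the tree minus e.  Crossing an edge (i, j)
   changes this multiset by exactly mu_ij: A_j = A_i + {mu_ij}.  Applying
   T_{A_i} to the i-th equation therefore turns T_{mu_ij} psi_ij into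
   T_{A_j} psi_ij; summing over i and using the j-th equations eliminates all
   the psi_ij and yields (i).  Parts (ii) and (iii) are the same elimination
   with A_i = [], B_j = [mu_j] and with A_i = M_i, B_j = M. *)

From HB Require Import structures.
From mathcomp Require Import all_boot all_order all_algebra.
From mathcomp Require Import all_classical all_reals all_analysis.
Import Order.TTheory GRing.Theory Num.Theory.
Local Open Scope ring_scope.
Set Implicit Arguments. Unset Strict Implicit. Unset Printing Implicit Defensive.

Section VolterraOperators.
Variable R : realType.
Implicit Types (f g : R -> R) (a b t : R) (s : seq R).

Definition locally_integrable f := forall t, 0 <= t ->
  (@lebesgue_measure R).-integrable `[0, t]%classic (EFin \o f).

Lemma locally_integrableD f g :
  locally_integrable f -> locally_integrable g -> locally_integrable (f + g).
Proof. by move=> lf lg t t0; exact: (integrableD _ (lf t t0) (lg t t0)). Qed.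

Lemma locally_integrableZ a f :
  locally_integrable f -> locally_integrable (a *: f).
Proof.
by move=> lf t t0; apply: eq_integrable (integrableZl _ a (lf t t0)).
Qed.

Lemma locally_integrableN f : locally_integrable f -> locally_integrable (- f).
Proof. by move=> /(locally_integrableZ (-1)); rewrite scaleN1r. Qed.

Lemma locally_integrable_sum (T : Type) (r : seq T) (F : T -> R -> R) :
  (forall i, locally_integrable (F i)) ->
  locally_integrable (\sum_(i <- r) F i).
Proof.
move=> lF; elim: r => [|i r IH]; first by rewrite big_nil => t t0; exact: integrable0.
by rewrite big_cons; exact: locally_integrableD.
Qed.

Lemma meas_locbdd_locally_integrable f : meas_locbdd f -> locally_integrable f.
Proof.
case=> mf bd t t0; apply: measurable_bounded_integrable => //.
- by rewrite /= lebesgue_measure_itv/=; case: ifP => // _; rewrite -EFinD ltry.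
- by apply: measurable_funS mf => // x; rewrite /= !in_itv /= => /andP[-> _].
- have [C HC] := bd t t0; exists C; split; first exact: num_real.
  move=> M CM x; rewrite /= in_itv/= => xt.
  exact: le_trans (HC x xt) (ltW CM).
Qed.

Lemma locally_integrable_Jop f :
  locally_integrable f -> locally_integrable (Jop f).
Proof.
move=> lf t t0; apply: continuous_compact_integrable; first exact: segment_compact.
exact: (parameterized_integral_continuous t0 (lf t t0)).
Qed.

Lemma TopE a f : Top a f = f + a *: Jop f.
Proof. by []. Qed.

Lemma locally_integrable_Top a f :
  locally_integrable f -> locally_integrable (Top a f).
Proof.
move=> lf; rewrite TopE; apply: locally_integrableD => //.
by apply: locally_integrableZ; exact: locally_integrable_Jop.
Qed.

Lemma locally_integrable_TopSeq s f :
  locally_integrable f -> locally_integrable (TopSeq s f).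
Proof. by elim: s => [|a s IH] //= lf; apply: locally_integrable_Top; exact: IH. Qed.

Lemma Jop_lt0 f t : t < 0 -> Jop f t = 0.
Proof. by move=> t0; rewrite /Jop set_itv_ge ?Rintegral_set0// bnd_simp -ltNge. Qed.

Lemma eq_Jop f g : {in Num.nneg, f =1 g} -> Jop f = Jop g.
Proof.
move=> fg; apply/funext => t; apply: eq_Rintegral => x.
by rewrite inE/= in_itv/= => /andP[x0 _]; apply: fg; rewrite nnegrE.
Qed.

(* Outside [0, +oo[ the integral is over the empty set, so these identities
   hold on the whole line. *)
Lemma JopD f g : locally_integrable f -> locally_integrable g ->
  Jop (f + g) = Jop f + Jop g.
Proof.
move=> lf lg; apply/funext => t; have [t0|t0] := leP 0 t.
  by rewrite /Jop RintegralD //; [exact: lf | exact: lg].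
by rewrite [in RHS]addrfctE /= !Jop_lt0 ?addr0.
Qed.

Lemma JopZ a f : locally_integrable f -> Jop (a *: f) = a *: Jop f.
Proof.
move=> lf; apply/funext => t; have [t0|t0] := leP 0 t.
  by rewrite /Jop /= RintegralZl //; exact: lf.
by rewrite [in RHS]scalrfctE /= !Jop_lt0 ?scaler0.
Qed.

Lemma Top0 f : Top 0 f = f.
Proof. by rewrite TopE scale0r addr0. Qed.

Lemma Top_cst0 a : Top a 0 = 0.
Proof.
by apply/funext => t; rewrite /Top /Jop/= Rintegral_cst ?mul0r ?mulr0 ?addr0.
Qed.

Lemma TopD a f g : locally_integrable f -> locally_integrable g ->
  Top a (f + g) = Top a f + Top a g.
Proof. by move=> lf lg; rewrite !TopE JopD // scalerDr addrACA. Qed.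

Lemma TopZ a b f : locally_integrable f -> Top a (b *: f) = b *: Top a f.
Proof. by move=> lf; rewrite !TopE JopZ // scalerDr !scalerA mulrC. Qed.

Lemma TopC a b f : locally_integrable f -> Top a (Top b f) = Top b (Top a f).
Proof.
move=> lf; have lJ := locally_integrable_Jop lf.
rewrite !TopE !JopD ?JopZ //; try exact: locally_integrableZ.
by rewrite !scalerDr !scalerA [b * a]mulrC !addrA (addrAC f).
Qed.

Lemma eq_Top a f g : {in Num.nneg, f =1 g} -> {in Num.nneg, Top a f =1 Top a g}.
Proof. by move=> fg t t0; rewrite /Top fg // (eq_Jop fg). Qed.

Lemma TopSeq_cat s1 s2 f : TopSeq (s1 ++ s2) f = TopSeq s1 (TopSeq s2 f).
Proof. exact: foldr_cat. Qed.

Lemma TopSeq_rcons s a f : TopSeq (rcons s a) f = TopSeq s (Top a f).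
Proof. by rewrite /TopSeq foldr_rcons. Qed.

Lemma eq_TopSeq s f g :
  {in Num.nneg, f =1 g} -> {in Num.nneg, TopSeq s f =1 TopSeq s g}.
Proof. by elim: s => [|a s IH] //= fg; apply: eq_Top; exact: IH. Qed.

Lemma TopSeq_cst0 s : TopSeq s 0 = 0.
Proof. by elim: s => [|a s /= ->] //; exact: Top_cst0. Qed.

Lemma TopSeqD s f g : locally_integrable f -> locally_integrable g ->
  TopSeq s (f + g) = TopSeq s f + TopSeq s g.
Proof.
elim: s => [|a s IH] //= lf lg.
by rewrite IH // TopD //; exact: locally_integrable_TopSeq.
Qed.

Lemma TopSeqZ s b f : locally_integrable f -> TopSeq s (b *: f) = b *: TopSeq s f.
Proof.
elim: s => [|a s IH] //= lf.
by rewrite IH // TopZ //; exact: locally_integrable_TopSeq.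
Qed.

Lemma TopSeqN s f : locally_integrable f -> TopSeq s (- f) = - TopSeq s f.
Proof. by move=> lf; rewrite -scaleN1r TopSeqZ // scaleN1r. Qed.

Lemma TopSeqB s f g : locally_integrable f -> locally_integrable g ->
  TopSeq s (f - g) = TopSeq s f - TopSeq s g.
Proof.
by move=> lf lg; rewrite TopSeqD ?TopSeqN //; exact: locally_integrableN.
Qed.

Lemma TopSeq_sum s (T : Type) (r : seq T) (F : T -> R -> R) :
  (forall i, locally_integrable (F i)) ->
  TopSeq s (\sum_(i <- r) F i) = \sum_(i <- r) TopSeq s (F i).
Proof.
move=> lF; elim: r => [|i r IH]; first by rewrite !big_nil TopSeq_cst0.
by rewrite !big_cons TopSeqD ?IH //; exact: locally_integrable_sum.
Qed.

Lemma TopSeq_Top s a f :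
  locally_integrable f -> TopSeq s (Top a f) = Top a (TopSeq s f).
Proof.
elim: s => [|b s IH] //= lf.
by rewrite IH // TopC //; exact: locally_integrable_TopSeq.
Qed.

Lemma perm_TopSeq s1 s2 f : locally_integrable f ->
  perm_eq s1 s2 -> TopSeq s1 f = TopSeq s2 f.
Proof.
move=> lf; elim: s1 s2 => [|a s1 IH] s2; first by rewrite perm_sym => /perm_nilP ->.
move=> eq_s; have a_s2 : a \in s2 by rewrite -(perm_mem eq_s) mem_head.
move: eq_s; case/splitPr: a_s2 => s2l s2r.
rewrite perm_sym -(cat1s a s2r) perm_catCA /= perm_cons perm_sym => /IH ->.
by rewrite !TopSeq_cat /= TopSeq_Top //; exact: locally_integrable_TopSeq.
Qed.

End VolterraOperators.

Lemma perm_map_filter_pivot (T U : eqType) (f : T -> U) (p q : pred T) s x :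
  uniq s -> x \in s -> p x -> ~~ q x -> {in predC1 x, p =1 q} ->
  perm_eq [seq f y | y <- s & p y] (f x :: [seq f y | y <- s & q y]).
Proof.
move=> s_uniq s_x px qx pq; have s_rem := perm_to_rem s_x.
rewrite (permPl (perm_map f (perm_filter p s_rem))).
rewrite /= px perm_cons (permPr (perm_map f (perm_filter q s_rem))) /= (negbTE qx).
by rewrite (@eq_in_filter _ p q) // => y; rewrite mem_rem_uniq // => /andP[/pq].
Qed.

Section ForestBranches.
Variables (I J : nat) (E : 'I_I -> 'I_J -> bool).
Implicit Types (e : 'I_I * 'I_J) (u v : 'I_I + 'I_J).

Definition bip_acyclic :=
  forall p : seq ('I_I + 'I_J), ucycle (bip_adj E) p -> (size p <= 2)%N.

Definition remove_edge e i j := E i j && ((i, j) != e).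

Definition on_J_side e v := connect (bip_adj (remove_edge e)) v (inr e.2).

Lemma on_J_side_edge e i j :
  E i j -> e != (i, j) -> on_J_side e (inl i) = on_J_side e (inr j).
Proof.
move=> Eij ne; have ij : remove_edge e i j by rewrite /remove_edge Eij eq_sym.
by apply/idP/idP; apply: connect_trans; apply: connect1.
Qed.

Lemma on_J_side_J_end e : on_J_side e (inr e.2).
Proof. exact: connect0. Qed.

(* A path from i to j avoiding the edge (i, j), shortened to a simple one and
   closed by that edge, would be a cycle of length at least 3. *)
Lemma on_J_side_I_end i j : bip_acyclic -> E i j -> ~~ on_J_side (i, j) (inl i).
Proof.
move=> acyclic Eij; apply/negP => /connectP[p p_path p_last].
case/shortenP: p_path p_last => p' p'_path p'_uniq _ p'_last.
have : ucycle (bip_adj E) (inl i :: p').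
  rewrite /ucycle p'_uniq andbT /cycle rcons_path -p'_last /= Eij andbT.
  by apply: sub_path p'_path => u v; case: u v => [?|?] [?|?] //= /andP[].
move=> /acyclic; case: p' p'_path {p'_uniq} p'_last => [|v [|? ?]] //=.
by move=> p_edge v_j; move: p_edge; rewrite -v_j /remove_edge eqxx andbF.
Qed.

End ForestBranches.

Section BranchWeights.
Variables (T : eqType) (I J : nat) (E : 'I_I -> 'I_J -> bool) (mu : 'I_I -> 'I_J -> T).

Definition branch_edges v : pred ('I_I * 'I_J) :=
  fun e => E e.1 e.2 && on_J_side E e v.

Definition branch_weights v :=
  [seq mu e.1 e.2 | e <- enum {: 'I_I * 'I_J} & branch_edges v e].

Lemma branch_weightsP v a :
  a \in branch_weights v -> exists i j, E i j /\ mu i j = a.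
Proof.
by case/mapP=> -[i j]; rewrite mem_filter => /andP[/andP[Eij _] _] ->; exists i, j.
Qed.

Lemma perm_branch_weights i j : bip_acyclic E -> E i j ->
  perm_eq (branch_weights (inr j)) (mu i j :: branch_weights (inl i)).
Proof.
move=> acyclic Eij.
apply: (perm_map_filter_pivot _ (enum_uniq _) (mem_enum _ (i, j))).
- by rewrite /branch_edges Eij on_J_side_J_end.
- by rewrite /branch_edges Eij on_J_side_I_end.
- move=> e ne; rewrite /branch_edges (on_J_side_edge Eij) //; exact: ne.
Qed.

End BranchWeights.

Section Elimination.
Variables (R : realType) (I J : nat) (E : 'I_I -> 'I_J -> bool).
Variables (mu : 'I_I -> 'I_J -> R) (theta : 'I_I -> R).
Variables (w y : 'I_I -> R -> R) (z : 'I_J -> R -> R) (psi : 'I_I -> 'I_J -> R -> R).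
Hypotheses (w_int : forall i, locally_integrable (w i))
  (y_int : forall i, locally_integrable (y i))
  (z_int : forall j, locally_integrable (z j))
  (psi_int : forall i j, locally_integrable (psi i j)).
Hypothesis psi_off : forall i j t, ~~ E i j -> 0 <= t -> psi i j t = 0.
Hypothesis balance_I : forall i t, 0 <= t ->
  \sum_(j < J) Top (mu i j) (psi i j) t = w i t - Top (theta i) (y i) t.
Hypothesis balance_J : forall j t, 0 <= t -> \sum_(i < I) psi i j t = - z j t.

Lemma TopSeq_balance_I (A : 'I_I -> seq R) (B : 'I_J -> seq R) i t :
  (forall j, E i j -> perm_eq (B j) (mu i j :: A i)) -> 0 <= t ->
  TopSeq (A i) (w i) t - TopSeq (rcons (A i) (theta i)) (y i) t
  = \sum_(j < J) TopSeq (B j) (psi i j) t.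
Proof.
move=> AB t0; have Top_psi_int j := locally_integrable_Top (mu i j) (psi_int i j).
rewrite TopSeq_rcons -[LHS]/((_ - _) t) -TopSeqB //; last exact: locally_integrable_Top.
have balance : {in Num.nneg,
    \sum_(j < J) Top (mu i j) (psi i j) =1 w i - Top (theta i) (y i)}.
  by move=> s; rewrite nnegrE fct_sumE => /balance_I.
rewrite -(eq_TopSeq _ balance) ?nnegrE //.
rewrite TopSeq_sum // fct_sumE; apply: eq_bigr => j _.
have [Eij|nEij] := boolP (E i j).
  by rewrite (perm_TopSeq _ (AB j Eij)) //= TopSeq_Top.
have psi0 : {in Num.nneg, psi i j =1 0} by move=> s; rewrite nnegrE; exact: psi_off.
by rewrite -TopSeq_rcons !(eq_TopSeq _ psi0) ?nnegrE // !TopSeq_cst0.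
Qed.

Lemma TopSeq_balance_J (B : 'I_J -> seq R) j t : 0 <= t ->
  \sum_(i < I) TopSeq (B j) (psi i j) t = - TopSeq (B j) (z j) t.
Proof.
move=> t0; rewrite -[RHS]/((- TopSeq (B j) (z j)) t) -TopSeqN //.
have balance : {in Num.nneg, \sum_(i < I) psi i j =1 - z j}.
  by move=> s; rewrite nnegrE fct_sumE => /balance_J.
rewrite -(eq_TopSeq _ balance) ?nnegrE //.
by rewrite TopSeq_sum // fct_sumE.
Qed.

Lemma TopSeq_elimination (A : 'I_I -> seq R) (B : 'I_J -> seq R) t :
  (forall i j, E i j -> perm_eq (B j) (mu i j :: A i)) -> 0 <= t ->
  \sum_(i < I) TopSeq (A i) (w i) t
  - \sum_(i < I) TopSeq (rcons (A i) (theta i)) (y i) t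
  + \sum_(j < J) TopSeq (B j) (z j) t = 0.
Proof.
move=> AB t0; rewrite -sumrB (eq_bigr _ (fun i _ => TopSeq_balance_I (AB i) t0)).
rewrite exchange_big -big_split big1 //= => j _.
by rewrite TopSeq_balance_J // addNr.
Qed.

Lemma elimination_common_J (muJ : 'I_J -> R) t :
  (forall i j, E i j -> mu i j = muJ j) -> (forall i, theta i = 0) -> 0 <= t ->
  \sum_(i < I) (w i t - y i t) + \sum_(j < J) Top (muJ j) (z j) t = 0.
Proof.
move=> mu_J theta0 t0.
have -> : \sum_(i < I) (w i t - y i t) = \sum_(i < I) TopSeq [::] (w i) t
    - \sum_(i < I) TopSeq (rcons [::] (theta i)) (y i) t.
  by rewrite sumrB; congr (_ - _); apply: eq_bigr => i _; rewrite /= theta0 Top0.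
by apply: (TopSeq_elimination (B := fun j => [:: muJ j])) t0 => i j /mu_J ->.
Qed.

Lemma elimination_common_I (muI : 'I_I -> R) t :
  (forall i j, E i j -> mu i j = muI i) -> (forall i, theta i = 0) -> 0 <= t ->
  \sum_(i < I) TopSeq [seq muI i' | i' <- enum 'I_I & i' != i]
                      (fun s => w i s - y i s) t
  + TopSeq [seq muI i' | i' <- enum 'I_I] (fun s => \sum_(j < J) z j s) t = 0.
Proof.
move=> mu_I theta0 t0.
set Mi := fun i => [seq muI i' | i' <- enum 'I_I & i' != i].
have -> : \sum_(i < I) TopSeq (Mi i) (fun s => w i s - y i s) t =
    \sum_(i < I) TopSeq (Mi i) (w i) t
    - \sum_(i < I) TopSeq (rcons (Mi i) (theta i)) (y i) t.
  rewrite -sumrB; apply: eq_bigr => i _.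
  by rewrite TopSeq_rcons theta0 Top0 TopSeqB.
have -> : (fun s => \sum_(j < J) z j s) = \sum_(j < J) z j by rewrite fct_sumE.
rewrite TopSeq_sum // fct_sumE; apply: TopSeq_elimination t0 => i j /mu_I ->.
have := perm_map_filter_pivot muI (p := predT) (enum_uniq 'I_I) (mem_enum _ i) erefl.
by rewrite filter_predT; apply=> [|i']; rewrite ?eqxx // inE => ->.
Qed.

End Elimination.

Theorem theorem2 (R : realType) (I J : nat) (E : 'I_I -> 'I_J -> bool)
  (mu : 'I_I -> 'I_J -> R) (theta : 'I_I -> R)
  (w y : 'I_I -> R -> R) (z : 'I_J -> R -> R) (psi : 'I_I -> 'I_J -> R -> R) :
  is_tree E ->
  (forall i j, E i j -> 0 < mu i j) ->
  (forall i j, ~~ E i j -> mu i j = 0) ->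
  (forall i, 0 <= theta i) ->
  (forall i, meas_locbdd (w i)) -> (forall i, meas_locbdd (y i)) ->
  (forall j, meas_locbdd (z j)) -> (forall i j, meas_locbdd (psi i j)) ->
  (forall i j t, ~~ E i j -> 0 <= t -> psi i j t = 0) ->
  (forall i t, 0 <= t ->
     \sum_(j < J) Top (mu i j) (psi i j) t = w i t - Top (theta i) (y i) t) ->
  (forall j t, 0 <= t -> \sum_(i < I) psi i j t = - z j t) ->
  (* (i) *)
  (exists (A : 'I_I -> seq R) (B : 'I_J -> seq R),
     (forall i a, a \in A i -> exists i' j', E i' j' /\ mu i' j' = a) /\
     (forall j b, b \in B j -> exists i' j', E i' j' /\ mu i' j' = b) /\
     (forall t, 0 <= t ->
        \sum_(i < I) TopSeq (A i) (w i) t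
        - \sum_(i < I) TopSeq (rcons (A i) (theta i)) (y i) t
        + \sum_(j < J) TopSeq (B j) (z j) t = 0))
  /\
  (* (ii) *)
  (forall muJ : 'I_J -> R,
     (forall i j, E i j -> mu i j = muJ j) -> (forall i, theta i = 0) ->
     forall t, 0 <= t ->
       \sum_(i < I) (w i t - y i t) + \sum_(j < J) Top (muJ j) (z j) t = 0)
  /\
  (* (iii) *)
  (forall muI : 'I_I -> R,
     (forall i j, E i j -> mu i j = muI i) -> (forall i, theta i = 0) ->
     forall t, 0 <= t ->
       \sum_(i < I) TopSeq [seq muI i' | i' <- enum 'I_I & i' != i]
                           (fun s => w i s - y i s) t
       + TopSeq [seq muI i' | i' <- enum 'I_I] (fun s => \sum_(j < J) z j s) t
       = 0).

Proof.
move=> [_ acyclic] _ _ _ w_bdd y_bdd z_bdd psi_bdd psi_off balance_I balance_J.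
have w_int i := meas_locbdd_locally_integrable (w_bdd i).
have y_int i := meas_locbdd_locally_integrable (y_bdd i).
have z_int j := meas_locbdd_locally_integrable (z_bdd j).
have psi_int i j := meas_locbdd_locally_integrable (psi_bdd i j).
split; [|split].
- exists (branch_weights E mu \o inl), (branch_weights E mu \o inr).
  split; [|split] => [i a /branch_weightsP | j b /branch_weightsP | t t0] //.
  apply: (TopSeq_elimination w_int y_int z_int psi_int psi_off balance_I balance_J _ t0).
  by move=> i j; apply: perm_branch_weights.
- move=> muJ mu_J theta0 t.
  exact: (elimination_common_J w_int y_int z_int psi_int psi_off balance_I balance_J).
- move=> muI mu_I theta0 t.
  exact: (elimination_common_I w_int y_int z_int psi_int psi_off balance_I balance_J).
Qed.
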